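(* Let $\varepsilon\ge0$, $\lambda=e^{\varepsilon}-1$, and let $G=(g_1,\dots,g_t)$, $G'=(g'_1,\dots,g'_t)$ be probability vectors (nonnegative entries summing to $1$). For $S\subseteq[t]$ put $$\overline H(S)=\frac{\sum_{i\in[t]\setminus S}g_i+e^{\varepsilon}\sum_{j\in S}g_j}{\sum_{i\in[t]\setminus S}g'_i+e^{\varepsilon}\sum_{j\in S}g'_j}.$$ Run the following greedy procedure: let $q_i=g_i/g'_i$ (with $q_i=+\infty$ if $g'_i=0<g_i$, and $q_i$ arbitrary if $g_i=g'_i=0$); order the indices as $\pi(1),\dots,\pi(t)$ with $q_{\pi(1)}\ge q_{\pi(2)}\ge\dots\ge q_{\pi(t)}$; set $A=B=0$; for $r=1,\dots,t$ in turn, if $q_{\pi(r)}\ge\frac{1+A\lambda}{1+B\lambda}$ then replace $A$ by $A+g_{\pi(r)}$ and $B$ by $B+g'_{\pi(r)}$; finally output $\overline H^{\mathrm{alg}}=\frac{1+A\lambda}{1+B\lambda}$. Then $\overline H^{\mathrm{alg}}=\max_{S\subseteq[t]}\overline H(S)$.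
   Context: $[t]=\{1,\dots,t\}$. In the application, $G=(p(a_1\mid x),\dots,p(a_t\mid x))$ and $G'=(p(a_1\mid x'),\dots,p(a_t\mid x'))$ are conditional distributions of an attribute $\hat X$ with alphabet $\{a_1,\dots,a_t\}$ given two values $x,x'$ of another attribute $X_k$. *)

From HB Require Import structures.
From mathcomp Require Import all_boot all_order all_algebra all_fingroup.
From mathcomp Require Import reals ereal.
From mathcomp Require Import sequences exp.
Set Implicit Arguments. Unset Strict Implicit. Unset Printing Implicit Defensive.
Import Order.TTheory GRing.Theory Num.Theory.
Local Open Scope ring_scope.

Definition prob_vec (R : realType) (t : nat) (g : 'I_t -> R) : Prop :=
  (forall i, 0 <= g i) /\ \sum_(i < t) g i = 1.

Definition Hbar (R : realType) (t : nat) (eps : R) (g g' : 'I_t -> R)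
    (S : {set 'I_t}) : R :=
  (\sum_(i in ~: S) g i + expR eps * \sum_(j in S) g j) /
  (\sum_(i in ~: S) g' i + expR eps * \sum_(j in S) g' j).

Definition greedy_step (R : realType) (t : nat) (lam : R) (q : 'I_t -> \bar R)
    (g g' : 'I_t -> R) (AB : R * R) (i : 'I_t) : R * R :=
  if (((1 + AB.1 * lam) / (1 + AB.2 * lam))%:E <= q i)%E
  then (AB.1 + g i, AB.2 + g' i) else AB.

Definition H_alg (R : realType) (t : nat) (lam : R) (q : 'I_t -> \bar R)
    (pi : {perm 'I_t}) (g g' : 'I_t -> R) : R :=
  let AB := foldl (greedy_step lam q g g') (0, 0) [seq pi r | r <- enum 'I_t] in
  (1 + AB.1 * lam) / (1 + AB.2 * lam).

From HB Require Import structures.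
From mathcomp Require Import all_boot all_order all_algebra all_fingroup.
From mathcomp Require Import reals ereal.
From mathcomp Require Import sequences exp.
From mathcomp Require Import ring lra.
Set Implicit Arguments.
Unset Strict Implicit.
Unset Printing Implicit Defensive.

Import Order.TTheory GRing.Theory Num.Theory.
Local Open Scope ring_scope.

(* With lam = e^eps - 1, Hbar(S) = (1 + lam g(S)) / (1 + lam g'(S)). For a set P
   with ratio h = Hbar(P), the inequality Hbar(S) <= h is equivalent to
   g(S) - h g'(S) <= g(P) - h g'(P), so P is optimal as soon as it contains
   exactly the indices with g_i >= h g'_i (up to ties). The greedy procedure
   builds such a P: accepting an index of quotient q >= h replaces h by a
   mediant, which lies between h and q; hence h never decreases, stays below
   the quotients of all accepted indices (they come in decreasing order), and
   stays above those of all rejected ones. *)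

Lemma ler_sum_set_sign (R : numDomainType) (I : finType) (f : I -> R)
    (P S : {set I}) :
  (forall i, i \in P -> 0 <= f i) -> (forall i, i \notin P -> f i <= 0) ->
  \sum_(i in S) f i <= \sum_(i in P) f i.
Proof.
move=> fP fNP; rewrite big_mkcond [leRHS]big_mkcond /=.
apply: ler_sum => i _.
have [iP|iNP] := boolP (i \in P); case: (i \in S) => //.
- exact: fP.
- exact: fNP.
Qed.

Lemma ler_cross_pdiv (R : realFieldType) (a b c d : R) :
  0 < b -> 0 < d -> (a / b <= c / d) = (a * d <= c * b).
Proof. by move=> b0 d0; rewrite ler_pdivrMr // mulrAC ler_pdivlMr. Qed.

Section Greedy.

Variables (R : realType) (t : nat) (lam : R) (q : 'I_t -> \bar R).
Variables (g g' : 'I_t -> R).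
Hypothesis lam_ge0 : 0 <= lam.
Hypothesis g_ge0 : forall i, 0 <= g i.
Hypothesis g'_ge0 : forall i, 0 <= g' i.
Hypothesis q_ratio : forall i, 0 < g' i -> q i = (g i / g' i)%:E.
Hypothesis q_infty : forall i, g' i = 0 -> 0 < g i -> q i = +oo%E.

Definition ratio (A B : R) : R := (1 + A * lam) / (1 + B * lam).

Definition set_ratio (S : {set 'I_t}) : R :=
  ratio (\sum_(i in S) g i) (\sum_(i in S) g' i).

Lemma ratio_den_gt0 B : 0 <= B -> 0 < 1 + B * lam.
Proof. by move=> B0; rewrite ltr_pwDl ?mulr_ge0. Qed.

Lemma mul_le_of_le_q h i : (h%:E <= q i)%E -> h * g' i <= g i.
Proof.
have [g'_gt0 | g'_le0] := ltP 0 (g' i).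
  by rewrite q_ratio // lee_fin ler_pdivlMr // mulrC.
have -> : g' i = 0 by apply/le_anti; rewrite g'_le0 g'_ge0.
by rewrite mulr0.
Qed.

Lemma le_mul_of_q_lt h i : (q i < h%:E)%E -> g i <= h * g' i.
Proof.
have [g'_gt0 | g'_le0] := ltP 0 (g' i).
  by rewrite q_ratio // lte_fin ltr_pdivrMr // mulrC => /ltW.
have g'0 : g' i = 0 by apply/le_anti; rewrite g'_le0 g'_ge0.
have [g_gt0 | g_le0] := ltP 0 (g i); first by rewrite q_infty.
by rewrite g'0 mulr0.
Qed.

Lemma ratio_le_add A B i : 0 <= B -> ((ratio A B)%:E <= q i)%E ->
  ratio A B <= ratio (A + g i) (B + g' i).
Proof.
move=> B0 /mul_le_of_le_q; rewrite /ratio.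
have b0 := ratio_den_gt0 B0; have b1 := ratio_den_gt0 (addr_ge0 B0 (g'_ge0 i)).
rewrite mulrAC ler_pdivrMr // ler_cross_pdiv // => dom.
by have := ler_wpM2l lam_ge0 dom; nra.
Qed.

Lemma ratio_add_le_q A B i : 0 <= B -> ((ratio A B)%:E <= q i)%E ->
  ((ratio (A + g i) (B + g' i))%:E <= q i)%E.
Proof.
move=> B0; rewrite /ratio.
have b0 := ratio_den_gt0 B0; have b1 := ratio_den_gt0 (addr_ge0 B0 (g'_ge0 i)).
have [g'_gt0 | g'_le0] := ltP 0 (g' i).
  rewrite q_ratio // !lee_fin !ler_cross_pdiv // => dom.
  by rewrite !mulrDl !mulrDr; lra.
have g'0 : g' i = 0 by apply/le_anti; rewrite g'_le0 g'_ge0.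
have [g_gt0 | g_le0] := ltP 0 (g i).
  by rewrite q_infty // => _; exact: leey.
have -> : g i = 0 by apply/le_anti; rewrite g_le0 g_ge0.
by rewrite g'0 !addr0.
Qed.

Lemma set_ratio_le_threshold (P S : {set 'I_t}) :
  (forall i, i \in P -> set_ratio P * g' i <= g i) ->
  (forall i, i \notin P -> g i <= set_ratio P * g' i) ->
  set_ratio S <= set_ratio P.
Proof.
set h := set_ratio P => P_above P_below.
have gain : \sum_(i in S) g i - h * \sum_(i in S) g' i <=
            \sum_(i in P) g i - h * \sum_(i in P) g' i.
  rewrite !mulr_sumr -!sumrB; apply: ler_sum_set_sign => i iP.
  - by rewrite subr_ge0 P_above.
  - by rewrite subr_le0 P_below.
have den_gt0 (X : {set 'I_t}) : 0 < 1 + (\sum_(i in X) g' i) * lam.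
  by apply/ratio_den_gt0/sumr_ge0.
have hP : h * (1 + (\sum_(i in P) g' i) * lam) = 1 + (\sum_(i in P) g i) * lam.
  by rewrite /h /set_ratio /ratio divfK ?gt_eqF ?den_gt0.
rewrite /set_ratio /ratio /= ler_pdivrMr //.
by have := ler_wpM2l lam_ge0 gain; nra.
Qed.

Definition greedy (s : seq 'I_t) : R * R :=
  foldl (greedy_step lam q g g') (0, 0) s.

Lemma greedy_invariant s :
  uniq s -> pairwise (fun i j => q j <= q i)%E s ->
  exists2 P : {set 'I_t},
    greedy s = (\sum_(i in P) g i, \sum_(i in P) g' i) &
    [/\ {subset P <= s},
        forall i, i \in P -> ((set_ratio P)%:E <= q i)%E &
        forall i, i \in s -> i \notin P -> (q i < (set_ratio P)%:E)%E].
Proof.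
elim/last_ind: s => [|s x IH].
  by move=> _ _; exists set0; rewrite ?big_set0 //; split=> // i; rewrite inE.
rewrite rcons_uniq pairwise_rcons.
move=> /andP[xNs s_uniq] /andP[/allP q_x_le s_sorted].
have [P greedy_s [P_s P_above P_below]] := IH s_uniq s_sorted.
have xNP : x \notin P by apply: contra xNs; apply: P_s.
have B_ge0 : 0 <= \sum_(i in P) g' i by apply: sumr_ge0.
rewrite /greedy foldl_rcons -/(greedy s) greedy_s /greedy_step.
case: ifP => [x_above | x_below].
  have sumU (f : 'I_t -> R) : \sum_(i in x |: P) f i = \sum_(i in P) f i + f x.
    by rewrite big_setU1 //= addrC.
  exists (x |: P); first by rewrite !sumU.
  rewrite /set_ratio !sumU; split.
  - move=> i; rewrite in_setU1 mem_rcons in_cons.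
    by case/orP=> [->|/P_s->]; rewrite ?orbT.
  - move=> i; rewrite in_setU1 => /orP[/eqP->|iP].
      exact: ratio_add_le_q B_ge0 x_above.
    exact: le_trans (ratio_add_le_q B_ge0 x_above) (q_x_le i (P_s i iP)).
  - move=> i; rewrite mem_rcons in_cons in_setU1 negb_or eq_sym.
    case: eqP => [-> //|_ /= i_s iNP].
    by apply: lt_le_trans (P_below i i_s iNP) _; rewrite lee_fin ratio_le_add.
exists P => //; split => //.
- by move=> i /P_s; rewrite mem_rcons in_cons orbC => ->.
- move=> i; rewrite mem_rcons in_cons => /orP[/eqP-> _|]; last exact: P_below.
  by rewrite ltNge x_below.
Qed.

End Greedy.

Lemma sum_setC_add_mul (R : comPzRingType) (I : finType) (f : I -> R)
    (S : {set I}) c :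
  \sum_(i in ~: S) f i + c * \sum_(i in S) f i =
  \sum_i f i + (\sum_(i in S) f i) * (c - 1).
Proof.
rewrite [\sum_i f i](bigID (mem S)) /=.
under [\sum_(i | i \notin S) f i]eq_bigl do rewrite -in_setC.
ring.
Qed.

Lemma Hbar_set_ratio (R : realType) t eps (g g' : 'I_t -> R) (S : {set 'I_t}) :
  \sum_i g i = 1 -> \sum_i g' i = 1 ->
  Hbar eps g g' S = set_ratio (expR eps - 1) g g' S.
Proof. by move=> g1 g'1; rewrite /Hbar !sum_setC_add_mul g1 g'1. Qed.

Lemma pairwise_map_enum_ord (T : Type) (r : rel T) n (f : 'I_n -> T) :
  (forall i j : 'I_n, (i <= j)%N -> r (f i) (f j)) ->
  pairwise r [seq f i | i <- enum 'I_n].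
Proof.
move=> f_mono; rewrite pairwise_map; apply: sub_pairwise f_mono _.
have := iota_sorted 0 n; rewrite -val_enum_ord sorted_pairwise ?pairwise_map //.
exact: leq_trans.
Qed.

Theorem theorem2 (R : realType) (t : nat) (eps : R) (g g' : 'I_t -> R)
    (q : 'I_t -> \bar R) (pi : {perm 'I_t}) :
  0 <= eps ->
  prob_vec g -> prob_vec g' ->
  (forall i, 0 < g' i -> q i = (g i / g' i)%:E) ->
  (forall i, g' i = 0 -> 0 < g i -> q i = +oo%E) ->
  (forall r s : 'I_t, (r <= s)%N -> (q (pi s) <= q (pi r))%E) ->
  let Halg := H_alg (expR eps - 1) q pi g g' in
  (forall S : {set 'I_t}, Hbar eps g g' S <= Halg) /\
  (exists S : {set 'I_t}, Hbar eps g g' S = Halg).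
Proof.
move=> eps_ge0 [g_ge0 g1] [g'_ge0 g'1] q_ratio q_infty q_sorted Halg.
set lam := expR eps - 1.
have lam_ge0 : 0 <= lam by rewrite subr_ge0 -expR0 ler_expR.
set s := [seq pi r | r <- enum 'I_t].
have s_uniq : uniq s by rewrite map_inj_uniq ?enum_uniq //; exact: perm_inj.
have s_full i : i \in s.
  by apply/mapP; exists (pi^-1 i)%g; rewrite ?mem_enum ?permKV.
have s_sorted : pairwise (fun i j => q j <= q i)%E s.
  exact: pairwise_map_enum_ord.
have [P greedy_s [_ P_above P_below]] :=
  greedy_invariant lam_ge0 g_ge0 g'_ge0 q_ratio q_infty s_uniq s_sorted.
have HalgE : Halg = set_ratio lam g g' P.
  by rewrite /Halg /H_alg -/(greedy lam q g g' s) greedy_s.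
split=> [S|]; last by exists P; rewrite Hbar_set_ratio.
rewrite Hbar_set_ratio // HalgE; apply: set_ratio_le_threshold => // i.
- by move/P_above; apply: mul_le_of_le_q.
- by move/(P_below i (s_full i)); apply: le_mul_of_q_lt.
Qed.
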